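(* In the setting of the context, assume the matrix representing $A$ with respect to the fixed feasible basis has constant row sum $\theta_r$ (i.e. $c_i+a_i+b_i=\theta_r$ for $0\le i\le d$), where $\theta_r$ is an eigenvalue of $A$. Let $s\in\{0,\dots,d\}$ with $s\ne r$. The following are equivalent: (i) in $\Delta$, vertex $r$ is adjacent to vertex $s$ and to no other vertex; (ii) for $0\le i\le d$, $$c_i\theta^*_{i-1}+a_i\theta^*_i+b_i\theta^*_{i+1}-\theta_r\theta^*_i=(\theta_s-\theta_r)(\theta^*_i-a^*_r)$$ (terms with $c_0=0$ or $b_d=0$ vanish), and $A^*$ is not a scalar multiple of $I$.
   Context: Let $\mathbb F$ be a field, $d\ge1$, $V$ an $\mathbb F$-vector space of dimension $d+1$, $\mathcal A=\mathrm{End}(V)$ with identity $I$. Let $E^*_0,\dots,E^*_d\in\mathcal A$ satisfy $E^*_iE^*_j=\delta_{i,j}E^*_i$, $\mathrm{rank}(E^*_i)=1$. Let $A\in\mathcal A$ satisfy $E^*_iAE^*_j=0$ if $|i-j|>1$ and $\neq0$ if $|i-j|=1$. Assume $A$ has $d+1$ distinct eigenvalues $\theta_0,\dots,\theta_d\in\mathbb F$ with primitive idempotents $E_i=\prod_{j\ne i}\frac{A-\theta_jI}{\theta_i-\theta_j}$. Let $\theta^*_i\in\mathbb F$, $A^*=\sum_i\theta^*_iE^*_i$, $a^*_i=\mathrm{tr}(E_iA^* )$. Let $\Delta$ be the graph on $\{0,\dots,d\}$ with $i\sim j$ iff $i\ne j$ and $E_iA^*E_j\ne0$. A basis $v_0,\dots,v_d$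 of $V$ is feasible if $v_i\in E^*_iV$ for all $i$; fix one. Then $Av_i=b_{i-1}v_{i-1}+a_iv_i+c_{i+1}v_{i+1}$ ($v_{-1}=v_{d+1}=0$), with $a_i=\mathrm{tr}(E^*_iA)$, nonzero $b_0,\dots,b_{d-1}$, $c_1,\dots,c_d$, and $b_d=c_0=0$; i.e. the representing matrix has diagonal $a_i$, $(i,i+1)$-entry $b_i$, $(i,i-1)$-entry $c_i$. *)

(* V = 'cV[F]_(d.+1) (column vectors), End(V) = 'M[F]_(d.+1). *)
From HB Require Import structures.
From mathcomp Require Import all_boot all_order all_algebra.
Set Implicit Arguments. Unset Strict Implicit. Unset Printing Implicit Defensive.
Import Order.TTheory GRing.Theory Num.Theory.
Local Open Scope ring_scope.

Section Defs.
Variables (F : fieldType) (n : nat).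

Definition prim_idem (A : 'M[F]_n.+1) (theta : 'I_n.+1 -> F) (i : 'I_n.+1)
  : 'M[F]_n.+1 :=
  \prod_(j < n.+1 | j != i) ((theta i - theta j)^-1 *: (A - (theta j)%:M)).

Definition dual_mx (Estar : 'I_n.+1 -> 'M[F]_n.+1) (thetas : 'I_n.+1 -> F)
  : 'M[F]_n.+1 := \sum_(i < n.+1) thetas i *: Estar i.

Definition delta_adj (E : 'I_n.+1 -> 'M[F]_n.+1) (Astar : 'M[F]_n.+1)
  (i j : 'I_n.+1) : bool := (i != j) && (E i *m Astar *m E j != 0).

Definition basis_mx (v : 'I_n.+1 -> 'cV[F]_n.+1) : 'M[F]_n.+1 :=
  \matrix_(k, j) v j k ord0.

(* matrix representing A w.r.t. the basis v: A v_j = sum_i (rep i j) v_i *)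
Definition rep_mx (v : 'I_n.+1 -> 'cV[F]_n.+1) (A : 'M[F]_n.+1) : 'M[F]_n.+1 :=
  invmx (basis_mx v) *m A *m basis_mx v.

(* nat-indexed entries: a_i (diagonal), b_i ((i,i+1)-entry, b_n = 0),
   c_i ((i,i-1)-entry, c_0 = 0) *)
Definition coef_a (B : 'M[F]_n.+1) (i : nat) : F := B (inord i) (inord i).
Definition coef_b (B : 'M[F]_n.+1) (i : nat) : F :=
  if (i < n)%N then B (inord i) (inord i.+1) else 0.
Definition coef_c (B : 'M[F]_n.+1) (i : nat) : F :=
  if (0 < i)%N then B (inord i) (inord i.-1) else 0.

End Defs.

From HB Require Import structures.
From mathcomp Require Import all_boot all_order all_algebra.
From mathcomp Require Import zify ring.
Import Order.TTheory GRing.Theory Num.Theory.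
Local Open Scope ring_scope.
Set Implicit Arguments. Unset Strict Implicit. Unset Printing Implicit Defensive.

(* Conjugating by the basis matrix P = [v_0 ... v_d] turns E^*_i into the matrix
   unit delta_ii, A into its representing matrix B, which is irreducible
   tridiagonal, A^* into T = diag(theta^*_i), and the primitive idempotents of A
   into those of B.  So everything is proved for B and T.  The idempotents are
   E_j = L_j(B) for the Lagrange polynomials L_j of the eigenvalues, hence
   sum_j E_j = I and B E_j = theta_j E_j.  Constant row sum says that the all-ones
   vector 1 is a theta_r-eigenvector; as an eigenvector of an irreducible
   tridiagonal matrix is determined by its first entry, E_r = 1 z has rank one.
   A diagonal symmetrizer D with D B = B^T D shows E_i T E_j = 0 iff E_j T E_i = 0.
   With x = T 1 - a^*_r 1 one gets E_r x = 0 and, for j <> r, r ~ j iff E_j x <> 0.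
   Thus (i) says that x is a nonzero theta_s-eigenvector of B, and the equation
   in (ii) is the i-th entry of (B - theta_s I) x = 0. *)

Section PrimitiveIdempotents.
Variables (F : fieldType) (n : nat) (theta : 'I_n.+1 -> F).

Definition lagrange_poly (j : 'I_n.+1) : {poly F} :=
  \prod_(k < n.+1 | k != j) ((theta j - theta k)^-1 *: ('X - (theta k)%:P)).

Definition annihilator : {poly F} := \prod_(k < n.+1) ('X - (theta k)%:P).

Lemma horner_mx_lagrange (M : 'M[F]_n.+1) j :
  horner_mx M (lagrange_poly j) = prim_idem M theta j.
Proof.
rewrite rmorph_prod; apply: eq_bigr => k _.
by rewrite -mul_polyC rmorphM /= horner_mx_C rmorphB /= horner_mx_X horner_mx_C
  -mulmxE mul_scalar_mx.
Qed.

Lemma horner_mx_eigvec (M : 'M[F]_n.+1) m (Y : 'M[F]_(n.+1, m)) l (p : {poly F}) :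
  M *m Y = l *: Y -> horner_mx M p *m Y = p.[l] *: Y.
Proof.
move=> MY; elim/poly_ind: p => [|p c IH].
  by rewrite rmorph0 horner0 mul0mx scale0r.
rewrite rmorphD rmorphM /= horner_mx_X horner_mx_C hornerMXaddC.
rewrite -[_ * M]/(horner_mx M p *m M) mulmxDl -mulmxA MY -scalemxAr IH.
by rewrite scalerA scalerDl mul_scalar_mx mulrC.
Qed.

Hypothesis theta_inj : injective theta.

Lemma lagrange_poly_theta i j : (lagrange_poly j).[theta i] = (i == j)%:R.
Proof.
rewrite horner_prod; have [->|nij] := eqVneq i j.
  rewrite big1 // => k kj; rewrite hornerZ hornerXsubC mulVf // subr_eq0.
  by apply: contra kj => /eqP/theta_inj ->.
by rewrite (bigD1 i) //= hornerZ hornerXsubC subrr mulr0 mul0r.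
Qed.

Lemma size_lagrange_poly j : (size (lagrange_poly j) <= n.+1)%N.
Proof.
rewrite /lagrange_poly scaler_prod (leq_trans (size_scale_leq _ _)) //.
rewrite -big_filter size_prod_XsubC ltnS size_filter.
have -> : count (predC1 j) (index_enum 'I_n.+1) = #|predC1 j|.
  by rewrite cardE /enum_mem size_filter.
by rewrite cardC1 card_ord.
Qed.

(* The L_j sum to 1: the difference has degree <= n but n+1 distinct roots. *)
Lemma sum_lagrange_poly : \sum_j lagrange_poly j = 1.
Proof.
apply/eqP; rewrite -subr_eq0; apply/eqP; set p := _ - 1.
have size_p : (size p <= n.+1)%N.
  rewrite (leq_trans (size_polyD _ _)) // geq_max size_polyN size_poly1 andbT.
  elim/big_ind: _ => [|x y hx hy|j _]; rewrite ?size_poly0 ?size_lagrange_poly //.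
  by rewrite (leq_trans (size_polyD _ _)) // geq_max hx hy.
apply: contraTeq size_p => p_neq0; rewrite -ltnNge.
have := max_poly_roots p_neq0 (rs := [seq theta i | i <- enum 'I_n.+1]).
rewrite size_map size_enum_ord map_inj_uniq ?enum_uniq //; apply => //.
apply/allP => x /mapP [i _ ->]; rewrite /root /p hornerD hornerN hornerC horner_sum.
rewrite (bigD1 i) //= lagrange_poly_theta eqxx big1 ?addr0 ?subrr // => j ji.
by rewrite lagrange_poly_theta eq_sym (negPf ji).
Qed.

Lemma sum_prim_idem (M : 'M[F]_n.+1) : \sum_j prim_idem M theta j = 1%:M.
Proof.
under eq_bigr => j _ do rewrite -horner_mx_lagrange.
by rewrite -rmorph_sum sum_lagrange_poly rmorph1.
Qed.

Lemma prim_idem_eigvec (M : 'M[F]_n.+1) m (Y : 'M[F]_(n.+1, m)) j k :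
  M *m Y = theta k *: Y -> prim_idem M theta j *m Y = (k == j)%:R *: Y.
Proof.
by move=> MY; rewrite -horner_mx_lagrange (horner_mx_eigvec _ MY) lagrange_poly_theta.
Qed.

(* n+1 distinct eigenvalues exhaust the characteristic polynomial, so by
   Cayley-Hamilton the annihilator vanishes at M. *)
Lemma eigenvalues_annihilate (M : 'M[F]_n.+1) :
  (forall i, eigenvalue M (theta i)) -> horner_mx M annihilator = 0.
Proof.
move=> eigM; set rs := [seq theta i | i <- enum 'I_n.+1].
have rs_roots : all (root (char_poly M)) rs.
  by apply/allP => _ /mapP [i _ ->]; rewrite -eigenvalue_root_char.
have size_rs : size (char_poly M) = (size rs).+1.
  by rewrite size_char_poly size_map size_enum_ord.
have rs_uniq : uniq_roots rs by rewrite uniq_rootsE map_inj_uniq ?enum_uniq.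
have := all_roots_prod_XsubC size_rs rs_roots rs_uniq.
rewrite (monicP (char_poly_monic M)) scale1r big_map big_enum /= => charM.
by rewrite /annihilator -charM Cayley_Hamilton.
Qed.

Section Annihilated.
Variable M : 'M[F]_n.+1.
Hypothesis M_annihilated : horner_mx M annihilator = 0.

(* The columns of E_j are theta_j-eigenvectors: (X - theta_j) L_j is a
   multiple of the annihilator. *)
Lemma prim_idem_eigen j : M *m prim_idem M theta j = theta j *: prim_idem M theta j.
Proof.
apply/eqP; rewrite -subr_eq0 -mul_scalar_mx -mulmxBl; apply/eqP.
have factor : ('X - (theta j)%:P) * lagrange_poly j =
    (\prod_(k < n.+1 | k != j) (theta j - theta k)^-1) *: annihilator.
  by rewrite /lagrange_poly scaler_prod -scalerAr [annihilator](bigD1 j).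
have := congr1 (horner_mx M) factor.
rewrite rmorphM /= horner_mx_lagrange rmorphB /= horner_mx_X horner_mx_C -mulmxE => ->.
by rewrite linearZ /= M_annihilated scaler0.
Qed.

(* A vector killed by every E_j with j <> s equals E_s y, hence is a
   theta_s-eigenvector. *)
Lemma prim_idem_support m (y : 'M[F]_(n.+1, m)) s :
  (forall j, j != s -> prim_idem M theta j *m y = 0) -> M *m y = theta s *: y.
Proof.
move=> Ey; have -> : y = prim_idem M theta s *m y.
  rewrite -{1}[y]mul1mx -(sum_prim_idem M) mulmx_suml (bigD1 s) //=.
  by rewrite big1 ?addr0.
by rewrite mulmxA (prim_idem_eigen s) -scalemxAl.
Qed.

End Annihilated.
End PrimitiveIdempotents.

Section RepresentingMatrix.
Variables (F : fieldType) (n : nat) (v : 'I_n.+1 -> 'cV[F]_n.+1).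
Hypothesis v_basis : basis_mx v \in unitmx.

Local Notation P := (basis_mx v).

Lemma rep_mxM X Y : rep_mx v (X *m Y) = rep_mx v X *m rep_mx v Y.
Proof. by rewrite /rep_mx !mulmxA mulmxK. Qed.

Lemma rep_mx_scalar c : rep_mx v c%:M = c%:M.
Proof. by rewrite /rep_mx mul_mx_scalar -scalemxAl mulVmx // scalemx1. Qed.

Lemma rep_mx_inj : injective (rep_mx v).
Proof.
move=> X Y /(congr1 (fun Z => P *m Z *m invmx P)) /=.
by rewrite /rep_mx !mulmxA (mulmxV v_basis) !mul1mx !(mulmxK v_basis).
Qed.

Lemma rep_mx0 : rep_mx v 0 = 0.
Proof. by rewrite /rep_mx mulmx0 mul0mx. Qed.

Lemma rep_mx_eq0 X : (rep_mx v X == 0) = (X == 0).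
Proof. by apply/eqP/eqP => [|->]; rewrite ?rep_mx0 // -{1}rep_mx0 => /rep_mx_inj. Qed.

Lemma rep_mx_is_scalar X : (exists c, rep_mx v X = c%:M) <-> (exists c, X = c%:M).
Proof.
split=> [] [c Xc]; exists c; last by rewrite Xc rep_mx_scalar.
by apply: rep_mx_inj; rewrite Xc rep_mx_scalar.
Qed.

Lemma rep_mx_horner X p : horner_mx (rep_mx v X) p = rep_mx v (horner_mx X p).
Proof. exact: horner_mx_uconjC. Qed.

Lemma rep_mx_trace X : \tr (rep_mx v X) = \tr X.
Proof. by rewrite /rep_mx -mulmxA mxtrace_mulC mulmxK. Qed.

End RepresentingMatrix.

Lemma delta_mx_sandwich (F : fieldType) n (M : 'M[F]_n) i j :
  delta_mx i i *m M *m delta_mx j j = M i j *: delta_mx i j.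
Proof.
apply/matrixP => k l; rewrite !mxE (bigD1 j) //= big1 ?addr0 => [|m mj]; last first.
  by rewrite !mxE (negbTE mj) andFb mulr0.
rewrite mxE (bigD1 i) //= big1 ?addr0 => [|m mi]; last first.
  by rewrite !mxE (negbTE mi) andbF mul0r.
rewrite !mxE !eqxx !andbT.
by case: (k == i); case: (l == j); rewrite ?mul1r ?mulr1 ?mul0r ?mulr0.
Qed.

Section FeasibleBasis.
Variables (F : fieldType) (n : nat) (Estar : 'I_n.+1 -> 'M[F]_n.+1)
  (v : 'I_n.+1 -> 'cV[F]_n.+1).
Hypothesis Estar_orth : forall i j, Estar i *m Estar j = if i == j then Estar i else 0.
Hypothesis v_feasible : forall i, exists w, v i = Estar i *m w.
Hypothesis v_basis : basis_mx v \in unitmx.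

Lemma Estar_feasible i j : Estar i *m v j = if i == j then v j else 0.
Proof.
have [w ->] := v_feasible j.
by rewrite mulmxA Estar_orth; case: (i =P j) => [->|_]; rewrite ?mul0mx.
Qed.

Lemma rep_Estar i : rep_mx v (Estar i) = delta_mx i i.
Proof.
suff Estar_P : Estar i *m basis_mx v = basis_mx v *m delta_mx i i.
  by rewrite /rep_mx -mulmxA Estar_P mulKmx.
apply/matrixP => k j; rewrite [RHS]mxE (bigD1 i) //= big1 ?addr0 => [|l li]; last first.
  by rewrite !mxE (negbTE li) mulr0.
transitivity ((Estar i *m v j) k 0); first by rewrite !mxE; apply: eq_bigr => l _; rewrite mxE.
by rewrite Estar_feasible !mxE eqxx; case: eqVneq => [->|_]; rewrite ?mulr1 ?mulr0 ?mxE.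
Qed.

Lemma rep_dual_mx (t : 'I_n.+1 -> F) :
  rep_mx v (dual_mx Estar t) = diag_mx (\row_i t i).
Proof.
rewrite diag_mx_sum_delta /dual_mx /rep_mx mulmx_sumr mulmx_suml.
apply: eq_bigr => i _; rewrite -scalemxAr -scalemxAl mxE.
by congr (_ *: _); apply: rep_Estar.
Qed.

Lemma Estar_sandwich_eq0 X i j :
  (Estar i *m X *m Estar j == 0) = (rep_mx v X i j == 0).
Proof.
rewrite -(rep_mx_eq0 v_basis) !(rep_mxM v_basis) !rep_Estar delta_mx_sandwich.
by rewrite scaler_eq0 -[delta_mx i j == 0]negbK -mxrank_eq0 mxrank_delta orbF.
Qed.

End FeasibleBasis.

Section Tridiagonal.
Variables (F : fieldType) (d : nat) (B : 'M[F]_d.+1).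
Hypothesis B_tridiag : forall i j : 'I_d.+1, (i.+1 < j)%N || (j.+1 < i)%N -> B i j = 0.

Lemma sum_at_index (f : 'I_d.+1 -> F) (m : nat) :
  \sum_(j < d.+1 | j == m :> nat) f j = if (m <= d)%N then f (inord m) else 0.
Proof.
case: leqP => [le_md|lt_dm].
  by apply: big_pred1 => j; rewrite /= -val_eqE /= inordK.
by rewrite big_pred0 // => j; apply/negbTE; rewrite neq_ltn (leq_trans (ltn_ord j)).
Qed.

Lemma tridiag_row_split (i : nat) (j : 'I_d.+1) (y : F) : (i <= d)%N ->
  B (inord i) j * y = (if j.+1 == i then B (inord i) j * y else 0)
    + (if j == i :> nat then B (inord i) j * y else 0)
    + (if j == i.+1 :> nat then B (inord i) j * y else 0).
Proof.
move=> le_id; have [far|near] := boolP ((i.+1 < j) || (j.+1 < i))%N.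
  by rewrite B_tridiag ?inordK // mul0r !if_same !addr0.
move: near; rewrite negb_or -!leqNgt => /andP [le_ji1 le_ij1].
case: (ltngtP j i) => [lt_ji|lt_ij|->].
- have -> : j.+1 == i by apply/eqP; lia.
  have -> : (j == i.+1 :> nat) = false by apply/eqP; lia.
  by rewrite !addr0.
- have -> : (j.+1 == i) = false by apply/eqP; lia.
  have -> : j == i.+1 :> nat by apply/eqP; lia.
  by rewrite !add0r.
- by rewrite !ifN ?addr0 ?add0r //; apply/eqP; lia.
Qed.

Lemma tridiag_mulmx m (Y : 'M[F]_(d.+1, m)) (i : nat) k : (i <= d)%N ->
  (B *m Y) (inord i) k = coef_c B i * Y (inord i.-1) k
     + coef_a B i * Y (inord i) k + coef_b B i * Y (inord i.+1) k.
Proof.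
move=> le_id; rewrite mxE (eq_bigr _ (fun j _ => tridiag_row_split j (Y j k) le_id)).
rewrite !big_split /= -!big_mkcond; congr (_ + _ + _).
- rewrite /coef_c; case: posnP => [->|gt_i0]; first by rewrite big_pred0 ?mul0r.
  rewrite (eq_bigl (fun j : 'I_d.+1 => j == i.-1 :> nat)) => [|j].
    by rewrite sum_at_index ifT //; lia.
  by apply/eqP/eqP; lia.
- by rewrite sum_at_index le_id.
- by rewrite sum_at_index /coef_b; case: ltnP; rewrite ?mul0r.
Qed.

Lemma tridiag_rowsum (l : F) :
  (forall i, (i <= d)%N -> coef_c B i + coef_a B i + coef_b B i = l) ->
  B *m const_mx 1 = l *: (const_mx 1 : 'cV[F]_d.+1).
Proof.
move=> rowsum; apply/matrixP => i k; have le_id : (i <= d)%N := ltn_ord i.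
by rewrite -[i]inord_val tridiag_mulmx // !mxE !mulr1 rowsum.
Qed.

Lemma tridiag_equation_iff (t : 'I_d.+1 -> F) (l lam a0 : F) :
  B *m const_mx 1 = l *: (const_mx 1 : 'cV[F]_d.+1) ->
  (forall i, (i <= d)%N ->
     coef_c B i * t (inord i.-1) + coef_a B i * t (inord i) + coef_b B i * t (inord i.+1)
       - l * t (inord i) = (lam - l) * (t (inord i) - a0))
  <-> (B - lam%:M) *m (\col_i t i - a0 *: const_mx 1) = 0.
Proof.
move=> B1; set tv := \col_i t i.
have entry i : ((B - lam%:M) *m (tv - a0 *: const_mx 1)) i 0
    = (B *m tv) i 0 - l * t i - (lam - l) * (t i - a0).
  by rewrite !mulmxBr !mulmxBl !mul_scalar_mx -!scalemxAr B1 !mxE; ring.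
have Btv i : (i <= d)%N -> (B *m tv) (inord i) 0 = coef_c B i * t (inord i.-1)
    + coef_a B i * t (inord i) + coef_b B i * t (inord i.+1).
  by move=> le_id; rewrite tridiag_mulmx // !mxE.
split=> [eqn | x0 i le_id].
  apply/matrixP => i j; have le_id : (i <= d)%N := ltn_ord i.
  by rewrite (ord1 j) -[i]inord_val entry Btv // eqn // !mxE subrr.
by apply/eqP; rewrite -Btv // -subr_eq0 -entry x0 mxE.
Qed.

End Tridiagonal.

Section IrreducibleTridiagonal.
Variables (F : fieldType) (d : nat) (B : 'M[F]_d.+1).
Hypothesis B_tridiag : forall i j : 'I_d.+1, (i.+1 < j)%N || (j.+1 < i)%N -> B i j = 0.
Hypothesis B_irreducible : forall i j : 'I_d.+1,
  (j == i.+1 :> nat) || (i == j.+1 :> nat) -> B i j != 0.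

Lemma superdiag_neq0 (i : nat) : (i < d)%N -> B (inord i) (inord i.+1) != 0.
Proof. by move=> lt_id; apply: B_irreducible; rewrite !inordK ?eqxx // ltnW. Qed.

Lemma subdiag_neq0 (i : nat) : (i < d)%N -> B (inord i.+1) (inord i) != 0.
Proof. by move=> lt_id; apply: B_irreducible; rewrite !inordK ?eqxx ?orbT // ltnW. Qed.

(* The diagonal symmetrizer D: d_(i+1) = d_i b_i / c_(i+1), so that
   d_i B_ij = B_ji d_j. *)
Fixpoint symmetrizer (i : nat) : F :=
  if i is i'.+1 then
    symmetrizer i' * B (inord i') (inord i'.+1) / B (inord i'.+1) (inord i')
  else 1.

Definition symmetrizer_mx : 'M[F]_d.+1 := diag_mx (\row_(i < d.+1) symmetrizer i).

Lemma symmetrizer_neq0 i : (i <= d)%N -> symmetrizer i != 0.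
Proof.
elim: i => [|i IH] le_id /=; first exact: oner_neq0.
by rewrite mulf_neq0 ?invr_eq0 ?mulf_neq0 ?IH ?superdiag_neq0 ?subdiag_neq0 // ltnW.
Qed.

Lemma symmetrizer_unit : symmetrizer_mx \in unitmx.
Proof.
rewrite unitmxE det_diag unitfE; apply/prodf_neq0 => i _.
by rewrite mxE symmetrizer_neq0 // -ltnS ltn_ord.
Qed.

Lemma symmetrizer_entry (a b : 'I_d.+1) : symmetrizer a * B a b = B b a * symmetrizer b.
Proof.
wlog le_ab : a b / (a <= b)%N.
  move=> sym; case: (leqP a b) => [/sym //|/ltnW /sym sym_ba].
  by rewrite mulrC -sym_ba mulrC.
case: (ltngtP b a.+1) => [lt_ba1|lt_a1b|b_a1].
- have -> : b = a by apply/val_inj/eqP; rewrite eqn_leq le_ab andbT -ltnS.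
  exact: mulrC.
- by rewrite !B_tridiag ?mulr0 ?mul0r // lt_a1b ?orbT.
- have lt_ad : (a < d)%N by rewrite -ltnS -b_a1 ltn_ord.
  have -> : b = inord a.+1 by apply: val_inj; rewrite /= inordK -?b_a1.
  rewrite inordK //= inord_val; field.
  by have := subdiag_neq0 lt_ad; rewrite inord_val.
Qed.

Lemma symmetrizer_transpose : symmetrizer_mx *m B = B^T *m symmetrizer_mx.
Proof.
by apply/matrixP => i j; rewrite mul_diag_mx mul_mx_diag !mxE symmetrizer_entry.
Qed.

Lemma symmetrizer_horner p :
  symmetrizer_mx *m horner_mx B p = (horner_mx B p)^T *m symmetrizer_mx.
Proof.
elim/poly_ind: p => [|p c IH]; first by rewrite rmorph0 mulmx0 trmx0 mul0mx.
rewrite rmorphD rmorphM /= horner_mx_X horner_mx_C -[_ * B]/(horner_mx B p *m B).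
rewrite mulmxDr mulmxA IH -mulmxA symmetrizer_transpose mulmxA -trmx_mul.
rewrite -(comm_mx_horner p (erefl : comm_mx B B)).
by rewrite linearD /= tr_scalar_mx mulmxDl scalar_mxC.
Qed.

(* For polynomials p, q in B and diagonal T: p(B) T q(B) = 0 implies
   q(B) T p(B) = 0, since D (p(B) T q(B)) = (q(B) T p(B))^T D. *)
Lemma horner_sandwich_sym (p q : {poly F}) (t : 'rV[F]_d.+1) :
  horner_mx B p *m diag_mx t *m horner_mx B q = 0 ->
  horner_mx B q *m diag_mx t *m horner_mx B p = 0.
Proof.
move=> pq0; have D_diag : symmetrizer_mx *m diag_mx t = diag_mx t *m symmetrizer_mx.
  exact: diag_mxC.
have conj : symmetrizer_mx *m (horner_mx B p *m diag_mx t *m horner_mx B q)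
    = (horner_mx B q *m diag_mx t *m horner_mx B p)^T *m symmetrizer_mx.
  rewrite !mulmxA symmetrizer_horner -!mulmxA (mulmxA symmetrizer_mx) D_diag.
  rewrite -mulmxA symmetrizer_horner.
  by rewrite !trmx_mul tr_diag_mx !mulmxA.
apply: trmx_inj; rewrite trmx0 -[_^T](mulmxK symmetrizer_unit) -conj pq0.
by rewrite mulmx0 mul0mx.
Qed.

(* An eigenvector of an irreducible tridiagonal matrix with first entry 0 is 0:
   the three-term recurrence determines each entry from the previous two. *)
Lemma eigvec_first_row m (Y : 'M[F]_(d.+1, m)) l :
  B *m Y = l *: Y -> row 0 Y = 0 -> Y = 0.
Proof.
move=> BY Y0; apply/matrixP => i c; rewrite -[i]inord_val mxE.
have zero_pair k : (k <= d)%N -> Y (inord k) c = 0 /\ Y (inord k.-1) c = 0.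
  elim: k => [|k IH] le_kd.
    have inord0 : inord 0 = 0 :> 'I_d.+1 by apply: val_inj; rewrite /= inordK.
    by have /matrixP/(_ 0 c) := Y0; rewrite !mxE inord0.
  have [Yk Yk1] := IH (ltnW le_kd); split => //.
  have := tridiag_mulmx B_tridiag Y c (ltnW le_kd).
  rewrite BY mxE Yk Yk1 !mulr0 !add0r /coef_b le_kd => /esym/eqP.
  by rewrite mulf_eq0 (negPf (superdiag_neq0 le_kd)) => /eqP.
by rewrite (zero_pair i (ltn_ord i)).1.
Qed.

Lemma eigvec_rank_one m (Y : 'M[F]_(d.+1, m)) l :
  B *m const_mx 1 = l *: (const_mx 1 : 'cV[F]_d.+1) -> B *m Y = l *: Y ->
  Y = const_mx 1 *m row 0 Y.
Proof.
move=> B1 BY; apply/eqP; rewrite -subr_eq0; apply/eqP.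
apply: (@eigvec_first_row _ _ l).
  by rewrite mulmxBr BY mulmxA B1 -scalemxAl scalerBr.
rewrite linearB /= row_mul (_ : row 0 (const_mx 1) = 1%:M) ?mul1mx ?subrr //.
by apply/matrixP => i j; rewrite !ord1 !mxE.
Qed.

End IrreducibleTridiagonal.

Section TridiagonalAdjacency.
Variables (F : fieldType) (d : nat) (B : 'M[F]_d.+1) (theta t : 'I_d.+1 -> F).
Variables (r s : 'I_d.+1).
Hypothesis B_tridiag : forall i j : 'I_d.+1, (i.+1 < j)%N || (j.+1 < i)%N -> B i j = 0.
Hypothesis B_irreducible : forall i j : 'I_d.+1,
  (j == i.+1 :> nat) || (i == j.+1 :> nat) -> B i j != 0.
Hypothesis theta_inj : injective theta.
Hypothesis B_annihilated : horner_mx B (annihilator theta) = 0.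

Local Notation ones := (const_mx 1 : 'cV[F]_d.+1).
Hypothesis B_rowsum : B *m ones = theta r *: ones.
Hypothesis s_neq_r : s != r.

Local Notation T := (diag_mx (\row_i t i)).
Local Notation tv := (\col_i t i : 'cV[F]_d.+1).
Local Notation E := (prim_idem B theta).
Local Notation a := (\tr (E r *m T)).
Local Notation x := (tv - a *: ones).

Lemma prim_idem_r_ones : E r *m ones = ones.
Proof. by rewrite (prim_idem_eigvec theta_inj _ B_rowsum) eqxx scale1r. Qed.

Lemma prim_idem_ones_other j : j != r -> E j *m ones = 0.
Proof.
by move=> j_neq_r; rewrite (prim_idem_eigvec theta_inj _ B_rowsum) eq_sym (negPf j_neq_r) scale0r.
Qed.

Lemma prim_idem_r_rank_one : E r = ones *m row 0 (E r).
Proof.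
exact: (eigvec_rank_one B_tridiag B_irreducible B_rowsum (prim_idem_eigen B_annihilated r)).
Qed.

Lemma diag_ones : T *m ones = tv.
Proof. by apply/matrixP => i j; rewrite mul_diag_mx !mxE mulr1. Qed.

(* E_r T 1 = a^*_r 1, where a^*_r = tr(E_r T) = z T 1. *)
Lemma prim_idem_r_tv : E r *m tv = a *: ones.
Proof.
have a_row : a = (row 0 (E r) *m tv) 0 0.
  rewrite {1}prim_idem_r_rank_one -mulmxA mxtrace_mulC -mulmxA diag_ones.
  by rewrite /mxtrace big_ord1.
apply/matrixP => i j; rewrite {1}prim_idem_r_rank_one -mulmxA a_row (ord1 j).
by rewrite [LHS]mxE big_ord1 !mxE mul1r mulr1.
Qed.

Lemma prim_idem_r_x : E r *m x = 0.
Proof. by rewrite mulmxBr -scalemxAr prim_idem_r_ones prim_idem_r_tv subrr. Qed.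

(* For j <> r: E_j T E_r = (E_j x) z and E_j x = E_j T E_r 1. *)
Lemma sandwich_r_eq0 j : j != r -> (E j *m T *m E r == 0) = (E j *m x == 0).
Proof.
move=> j_neq_r; have Ejx : E j *m x = E j *m tv.
  by rewrite mulmxBr -scalemxAr prim_idem_ones_other // scaler0 subr0.
apply/eqP/eqP; rewrite Ejx.
  by move=> EjTEr; rewrite -diag_ones -prim_idem_r_ones !mulmxA EjTEr mul0mx.
move=> Ejtv; rewrite {1}prim_idem_r_rank_one !mulmxA -(mulmxA _ T) diag_ones.
by rewrite Ejtv mul0mx.
Qed.

Lemma adjacent_r j : j != r -> delta_adj E T r j = (E j *m x != 0).
Proof.
move=> j_neq_r; rewrite /delta_adj eq_sym j_neq_r -sandwich_r_eq0 //; congr (~~ _).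
by apply/eqP/eqP; rewrite -!horner_mx_lagrange; apply: horner_sandwich_sym.
Qed.

Lemma x_eq0_scalar : x = 0 -> exists c, T = c%:M.
Proof.
move=> /matrixP x0; exists a; apply/matrixP => i j; rewrite !mxE.
by have /eqP := x0 i 0; rewrite !mxE mulr1 subr_eq0 => /eqP ->.
Qed.

(* A scalar T gives E_r T E_s = c E_r E_s = 0. *)
Lemma scalar_not_adjacent : (exists c, T = c%:M) -> ~~ delta_adj E T r s.
Proof.
case=> c ->; rewrite /delta_adj mul_mx_scalar -scalemxAl.
rewrite (prim_idem_eigvec theta_inj _ (prim_idem_eigen B_annihilated s)).
by rewrite (negPf s_neq_r) scale0r scaler0 eqxx andbF.
Qed.

Theorem tridiagonal_adjacency_iff :
  (forall j, delta_adj E T r j <-> j = s) <->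
  ((B - (theta s)%:M) *m x = 0 /\ ~ exists c, T = c%:M).
Proof.
have eigen_x : (B - (theta s)%:M) *m x = 0 <-> B *m x = theta s *: x.
  by rewrite mulmxBl mul_scalar_mx; split => [/eqP|->]; rewrite ?subr_eq0 ?subrr // => /eqP.
rewrite eigen_x; split => [adj | [Bx not_scalar] j].
  split; last by move/scalar_not_adjacent; rewrite (adj s).2.
  apply: (prim_idem_support theta_inj B_annihilated) => j j_neq_s.
  have [->|j_neq_r] := eqVneq j r; first exact: prim_idem_r_x.
  have [//|Ejx] := eqVneq (E j *m x) 0.
  have /(adj j).1 j_eq_s : delta_adj E T r j by rewrite adjacent_r.
  by rewrite j_eq_s eqxx in j_neq_s.
have Ex k : E k *m x = (s == k)%:R *: x := prim_idem_eigvec theta_inj k Bx.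
have x_neq0 : x != 0 by apply/eqP => /x_eq0_scalar.
have [->|j_neq_r] := eqVneq j r.
  by split=> [|r_eq_s]; [rewrite /delta_adj eqxx | move: s_neq_r; rewrite r_eq_s eqxx].
rewrite adjacent_r // Ex; split=> [|j_eq_s]; last by rewrite j_eq_s eqxx scale1r.
by case: (eqVneq s j) => [->|_]; rewrite ?mulr0n ?scale0r ?eqxx.
Qed.

End TridiagonalAdjacency.

Unset Implicit Arguments.

Theorem proposition8p2 (F : fieldType) (d : nat) (hd : (0 < d)%N)
  (Estar : 'I_d.+1 -> 'M[F]_d.+1) (A : 'M[F]_d.+1)
  (theta thetas : 'I_d.+1 -> F) (v : 'I_d.+1 -> 'cV[F]_d.+1)
  (r s : 'I_d.+1)
  (hEE : forall i j : 'I_d.+1,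
      Estar i *m Estar j = if i == j then Estar i else 0)
  (hrank : forall i, \rank (Estar i) = 1%N)
  (hA0 : forall i j : 'I_d.+1, (i.+1 < j)%N || (j.+1 < i)%N ->
      Estar i *m A *m Estar j = 0)
  (hA1 : forall i j : 'I_d.+1, (j == i.+1 :> nat) || (i == j.+1 :> nat) ->
      Estar i *m A *m Estar j != 0)
  (htheta_inj : injective theta)
  (htheta_eig : forall i, eigenvalue A (theta i))
  (hv_basis : basis_mx v \in unitmx)
  (hv_feas : forall i, exists w : 'cV[F]_d.+1, v i = Estar i *m w)
  (hrowsum : forall i : nat, (i <= d)%N ->
      coef_c (rep_mx v A) i + coef_a (rep_mx v A) i + coef_b (rep_mx v A) i
        = theta r)
  (hsr : s != r) :
  let Astar := dual_mx Estar thetas in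
  let E := prim_idem A theta in
  let B := rep_mx v A in
  let ths := fun k : nat => thetas (inord k) in
  let astar_r := \tr (E r *m Astar) in
  (forall j, delta_adj E Astar r j <-> j = s)
  <->
  ((forall i : nat, (i <= d)%N ->
      coef_c B i * ths i.-1 + coef_a B i * ths i + coef_b B i * ths i.+1
        - theta r * ths i
      = (theta s - theta r) * (ths i - astar_r))
   /\ ~ (exists c : F, Astar = c%:M)).
Proof.
move=> Astar E B ths astar_r.
have sandwichE := Estar_sandwich_eq0 hEE hv_feas hv_basis.
have B_tridiag (i j : 'I_d.+1) : (i.+1 < j)%N || (j.+1 < i)%N -> B i j = 0.
  by move=> /hA0/eqP; rewrite sandwichE => /eqP.
have B_irreducible (i j : 'I_d.+1) : (j == i.+1 :> nat) || (i == j.+1 :> nat) -> B i j != 0.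
  by move=> /hA1; rewrite sandwichE.
have B_annihilated : horner_mx B (annihilator theta) = 0.
  by rewrite rep_mx_horner // eigenvalues_annihilate // rep_mx0.
have B_rowsum := tridiag_rowsum B_tridiag hrowsum.
have T_rep : rep_mx v Astar = diag_mx (\row_i thetas i).
  exact: rep_dual_mx hEE hv_feas hv_basis thetas.
have E_rep k : rep_mx v (E k) = prim_idem B theta k.
  by rewrite -horner_mx_lagrange rep_mx_horner // horner_mx_lagrange.
have adjE j : delta_adj E Astar r j
    = delta_adj (prim_idem B theta) (diag_mx (\row_i thetas i)) r j.
  by rewrite /delta_adj -(rep_mx_eq0 hv_basis) !rep_mxM // !E_rep T_rep.
have aE : astar_r = \tr (prim_idem B theta r *m diag_mx (\row_i thetas i)).
  by rewrite /astar_r -(rep_mx_trace hv_basis) rep_mxM // E_rep T_rep.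
rewrite -(rep_mx_is_scalar hv_basis) T_rep aE.
rewrite (tridiag_equation_iff B_tridiag _ _ _ B_rowsum) -(tridiagonal_adjacency_iff thetas
  B_tridiag B_irreducible htheta_inj B_annihilated B_rowsum hsr).
by split=> adj j; [rewrite -adjE | rewrite adjE].
Qed.
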